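(* Let $A$ be a finite dimensional algebra with a regular $(\mathbb{Z}_2\times\mathbb{Z}_2)$-grading with bicharacter $\beta$, and assume that $A_{(0,0)}=K$. Then there exists a 2-cocycle $\alpha\in H^2(\mathbb{Z}_2\times\mathbb{Z}_2,K^{*})$ inducing $\beta$ such that $A\cong K^{\alpha}(\mathbb{Z}_2\times\mathbb{Z}_2)$ as $(\mathbb{Z}_2\times\mathbb{Z}_2)$-graded algebras.
   Context: All algebras are associative with unit over an algebraically closed field $K$ of characteristic $0$. For a finite abelian group $G$ (written additively, neutral element $0$), a $G$-grading on $A$ is a vector space decomposition $A=\bigoplus_{g\in G}A_g$ with $A_gA_h\subseteq A_{g+h}$. A $G$-graded algebra $A$ has a regular grading if (i) for every $n\in\mathbb{N}$ and every $(g_1,\dots,g_n)\in G^n$ there exist $a_i\in A_{g_i}$ with $a_1\cdots a_n\neq 0$, and (ii) there is a function $\beta\colon G\times G\to K^{*}$ with $a_ga_h=\beta(g,h)a_ha_g$ for all $g,h\in G$, $a_g\in A_g$, $a_h\in A_h$; $\beta$ is then a bicharacter ($\beta(g,h)=\beta(h,g)^{-1}$, multiplicative in each argument), called the bicharacter of $A$. For a 2-cocycle $\alpha\colon G\times G\to K^*$ (i.e. $\alpha(g,h+k)\alpha(h,k)=\alpha(g+h,k)\alpha(g,h)$), the twisted group algebra $K^{\alpha}G$ has basis $\{X_g: g\in G\}$ with $X_gX_h=\alpha(g,h)X_{g+h}$, $G$-graded by $(K^\alpha G)_g=KX_g$. We say $\alpha$ induces $\beta$ if $\beta(g,h)=\alpha(g,h)\alpha(h,g)^{-1}$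 for all $g,h$. *)

From HB Require Import structures.
From mathcomp Require Import all_boot all_order all_algebra all_field.
Set Implicit Arguments. Unset Strict Implicit. Unset Printing Implicit Defensive.
Import GRing.Theory.
Local Open Scope ring_scope.

Definition Z2Z2 := ('Z_2 * 'Z_2)%type.
HB.instance Definition _ := GRing.Zmodule.on Z2Z2.
HB.instance Definition _ := Finite.on Z2Z2.

Section Defs.
Variable K : fieldType.
Variable G : finZmodType.

Definition is_2cocycle (alpha : G -> G -> K) : Prop :=
  (forall g h, alpha g h != 0) /\
  (forall g h k, alpha g (h + k) * alpha h k = alpha (g + h) k * alpha g h).

Definition induces (alpha beta : G -> G -> K) : Prop :=
  forall g h, beta g h = alpha g h / alpha h g.

(* The twisted group algebra K^alpha G, realised on its coordinate space
   {ffun G -> K} w.r.t. the basis (X_g); X_g is the indicator of g. *)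
Definition tX (g : G) : {ffun G -> K} := [ffun k => if k == g then 1 else 0].

Definition tmul (alpha : G -> G -> K) (f1 f2 : {ffun G -> K}) : {ffun G -> K} :=
  [ffun k => \sum_(g : G) \sum_(h : G | g + h == k) alpha g h * f1 g * f2 h].

Definition tone (alpha : G -> G -> K) : {ffun G -> K} :=
  [ffun k => if k == 0 then (alpha 0 0)^-1 else 0].

Definition thom (g : G) (f : {ffun G -> K}) : Prop := forall h, h != g -> f h = 0.

Variable A : falgType K.

Definition is_grading (Ag : G -> {vspace A}) : Prop :=
  [/\ directv (\sum_(g : G) Ag g)%VS,
      (\sum_(g : G) Ag g)%VS = fullv &
      forall g h a b, a \in Ag g -> b \in Ag h -> a * b \in Ag (g + h)].

Definition regular_grading (Ag : G -> {vspace A}) (beta : G -> G -> K) : Prop :=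
  (forall (n : nat) (gs : n.-tuple G), exists xs : n.-tuple A,
      (forall i : 'I_n, tnth xs i \in Ag (tnth gs i)) /\
      \prod_(i < n) tnth xs i != 0) /\
  (forall g h, beta g h != 0) /\
  (forall g h a b, a \in Ag g -> b \in Ag h -> a * b = beta g h *: (b * a)).

Definition graded_iso_twisted (Ag : G -> {vspace A}) (alpha : G -> G -> K)
    (phi : A -> {ffun G -> K}) : Prop :=
  [/\ forall (c : K) a b g, phi (c *: a + b) g = c * phi a g + phi b g,
      bijective phi,
      forall a b, phi (a * b) = tmul alpha (phi a) (phi b),
      phi 1 = tone alpha &
      forall g f, (exists2 a, a \in Ag g & phi a = f) <-> thom g f].
End Defs.

From HB Require Import structures.
From mathcomp Require Import all_boot all_order all_algebra all_field.
From mathcomp Require Import ring.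
Set Implicit Arguments. Unset Strict Implicit. Unset Printing Implicit Defensive.
Import GRing.Theory.
Local Open Scope ring_scope.

(* Regularity makes every homogeneous component [A_g] a line spanned by an
   invertible element: pick [a] in [A_g] and [b] in [A_(-g)] with [a b <> 0];
   then [b a = c 1] with [c <> 0] because [A_0 = K], and every [x] in [A_g]
   equals [(x b) c^-1 a] with [x b] in [A_0].  For such generators [u_g] with
   [u_0 = 1], the structure constants of [u_g u_h = alpha(g,h) u_(g+h)] form a
   cocycle by associativity, induce [beta] by comparing [u_g u_h] with
   [u_h u_g], and the coordinates in the basis [(u_g)] are the graded
   isomorphism onto [K^alpha G]. *)

Lemma scalerIv (K : fieldType) (V : lmodType K) (w : V) :
  w != 0 -> injective ( *:%R^~ w : K -> V).
Proof.
move=> w_neq0 c1 c2 /eqP; rewrite -subr_eq0 -scalerBl scaler_eq0 (negbTE w_neq0).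
by rewrite orbF subr_eq0 => /eqP.
Qed.

Section GradedAlgebra.
Variables (K : fieldType) (G : finZmodType) (A : falgType K).
Variable Ag : G -> {vspace A}.
Hypothesis Ag_grading : is_grading Ag.

Lemma grading_mul g h a b : a \in Ag g -> b \in Ag h -> a * b \in Ag (g + h).
Proof. by case: Ag_grading => _ _; apply. Qed.

Lemma line_basis_structure_constants (u : G -> A) :
    (forall g, Ag g = <[u g]>%VS) ->
  exists alpha : G -> G -> K, forall g h, u g * u h = alpha g h *: u (g + h).
Proof.
move=> Ag_line.
have alpha_g g : exists f : G -> K, forall h, u g * u h = f h *: u (g + h).
  apply: (@fin_all_exists G (fun _ => K)
            (fun h (c : K) => u g * u h = c *: u (g + h))) => h.
  apply/vlineP; rewrite -Ag_line.
  by apply: grading_mul; rewrite Ag_line memv_line.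
exact: (@fin_all_exists G (fun _ => G -> K) (fun g (f : G -> K) =>
  forall h, u g * u h = f h *: u (g + h))).
Qed.

Section TwistedBasis.
Variables (u : G -> A) (alpha : G -> G -> K).
Hypothesis Ag_line : forall g, Ag g = <[u g]>%VS.
Hypothesis u_invl : forall g, exists v, v * u g = 1.
Hypothesis u_mul : forall g h, u g * u h = alpha g h *: u (g + h).

Lemma u_neq0 g : u g != 0.
Proof.
have [v vu1] := u_invl g; apply: contra_eq_neq vu1 => ->.
by rewrite mulr0 eq_sym oner_neq0.
Qed.

Lemma u_in_Ag g : u g \in Ag g.
Proof. by rewrite Ag_line memv_line. Qed.

Lemma structure_constant_neq0 g h : alpha g h != 0.
Proof.
have [v vu1] := u_invl g; apply/eqP => alpha0; have := u_neq0 h.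
by rewrite -[u h]mul1r -vu1 -mulrA u_mul alpha0 scale0r mulr0 eqxx.
Qed.

Lemma structure_constant_cocycle : is_2cocycle alpha.
Proof.
split=> [|g h k]; first exact: structure_constant_neq0.
apply: (scalerIv (u_neq0 (g + h + k))) => /=.
have -> : (alpha g (h + k) * alpha h k) *: u (g + h + k) = u g * (u h * u k).
  by rewrite u_mul -scalerAr u_mul scalerA mulrC addrA.
have -> : (alpha (g + h) k * alpha g h) *: u (g + h + k) = u g * u h * u k.
  by rewrite u_mul -scalerAl u_mul scalerA mulrC.
by rewrite mulrA.
Qed.

Lemma structure_constant_induces (beta : G -> G -> K) :
    (forall g h a b, a \in Ag g -> b \in Ag h -> a * b = beta g h *: (b * a)) ->
  induces alpha beta.
Proof.
move=> beta_comm g h.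
have := beta_comm _ _ _ _ (u_in_Ag g) (u_in_Ag h).
rewrite !u_mul scalerA addrC => /(scalerIv (u_neq0 _)) ->.
by rewrite mulfK ?structure_constant_neq0.
Qed.

Definition homogeneous_basis : #|G|.-tuple A := [tuple u (enum_val i) | i < #|G|].

Definition coords (a : A) : {ffun G -> K} :=
  [ffun g => coord homogeneous_basis (enum_rank g) a].

Definition combination (f : {ffun G -> K}) : A := \sum_g f g *: u g.

Lemma homogeneous_basisE (i : 'I_#|G|) : homogeneous_basis`_i = u (enum_val i).
Proof. by rewrite -tnth_nth tnth_mktuple. Qed.

Lemma homogeneous_basis_free : free homogeneous_basis.
Proof.
apply/freeP => k k_comb i.
case: Ag_grading => /directv_sum_independent Ag_indep _ _.
have: k (enum_rank (enum_val i)) *: u (enum_val i) = 0.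
  apply: (Ag_indep (fun g => k (enum_rank g) *: u g)) => // [g _|].
    by rewrite Ag_line memvZ ?memv_line.
  rewrite big_enum_val -[RHS]k_comb; apply: eq_bigr => j _.
  by rewrite enum_valK homogeneous_basisE.
by move/eqP; rewrite scaler_eq0 (negbTE (u_neq0 _)) orbF enum_valK => /eqP.
Qed.

Lemma homogeneous_basis_span a : a \in <<homogeneous_basis>>%VS.
Proof.
have : a \in (\sum_g Ag g)%VS by case: Ag_grading => _ -> _; rewrite memvf.
case/memv_sumP => vs vs_in ->; apply: rpred_sum => g _.
have := vs_in g isT; rewrite Ag_line => /vlineP [c ->].
apply/memvZ/memv_span/tnthP; exists (enum_rank g).
by rewrite tnth_mktuple enum_rankK.
Qed.

Lemma coord_homogeneous_basis g h :
  coord homogeneous_basis (enum_rank h) (u g) = (h == g)%:R.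
Proof.
rewrite -{1}(enum_rankK g) -homogeneous_basisE.
by rewrite coord_free ?homogeneous_basis_free // (inj_eq enum_rank_inj) eq_sym.
Qed.

Lemma coordsK : cancel coords combination.
Proof.
move=> a; rewrite {2}(coord_span (homogeneous_basis_span a)) /combination.
rewrite big_enum_val.
by apply: eq_bigr => i _; rewrite ffunE enum_valK homogeneous_basisE.
Qed.

Lemma combinationK : cancel combination coords.
Proof.
move=> f; apply/ffunP => g; rewrite /combination.
rewrite ffunE linear_sum (bigD1 g) //= big1 => [|h hg].
  by rewrite addr0 linearZ /= coord_homogeneous_basis eqxx mulr1.
by rewrite linearZ /= coord_homogeneous_basis eq_sym (negbTE hg) mulr0.
Qed.

Lemma combination_mul f1 f2 :
  combination f1 * combination f2 = combination (tmul alpha f1 f2).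
Proof.
rewrite /combination /tmul mulr_suml.
under eq_bigr => g _ do rewrite mulr_sumr.
under [RHS]eq_bigr => k _ do rewrite ffunE scaler_suml.
rewrite [RHS]exchange_big /=; apply: eq_bigr => g _.
under [RHS]eq_bigr => k _ do rewrite scaler_suml.
rewrite [RHS](exchange_big_dep xpredT) //=; apply: eq_bigr => h _.
rewrite (big_pred1 (g + h)) => [|k]; last by rewrite /= eq_sym.
by rewrite -scalerAl -scalerAr u_mul !scalerA; congr (_ *: _); ring.
Qed.

Lemma coords_homogeneous g f :
  (exists2 a, a \in Ag g & coords a = f) <-> thom g f.
Proof.
split=> [[a] | f_hom].
- rewrite Ag_line => /vlineP [c ->] <- h hg.
  by rewrite ffunE linearZ /= coord_homogeneous_basis (negbTE hg) mulr0.
- exists (combination f); last exact: combinationK.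
  rewrite /combination (bigD1 g) //= big1 ?addr0 => [|h hg].
    exact: memvZ (u_in_Ag g).
  by rewrite f_hom // scale0r.
Qed.

Lemma twisted_group_algebra_iso : u 0 = 1 -> graded_iso_twisted Ag alpha coords.
Proof.
move=> u0; have alpha00 : alpha 0 0 = 1.
  have := u_mul 0 0; rewrite addr0 u0 mulr1 -{1}[1 : A]scale1r.
  by move/(scalerIv (oner_neq0 A)).
split.
- by move=> c a b g; rewrite !ffunE linearP.
- by exists combination; [exact: coordsK | exact: combinationK].
- by move=> a b; rewrite -{1}(coordsK a) -{1}(coordsK b) combination_mul combinationK.
- apply/ffunP => k; rewrite -u0 !ffunE coord_homogeneous_basis alpha00 invr1.
  by case: (k == 0).
- exact: coords_homogeneous.
Qed.

End TwistedBasis.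
End GradedAlgebra.

Section RegularGrading.
Variables (K : fieldType) (G : finZmodType) (A : falgType K).
Variables (Ag : G -> {vspace A}) (beta : G -> G -> K).
Hypotheses (Ag_grading : is_grading Ag) (Ag_regular : regular_grading Ag beta).
Hypothesis Ag0 : Ag 0 = <[1 : A]>%VS.

Lemma in_Ag0 a : a \in Ag 0 -> exists c, a = c *: 1.
Proof. by rewrite Ag0 => /vlineP. Qed.

Lemma regular_nonzero_pair g :
  exists a b, [/\ a \in Ag g, b \in Ag (- g) & a * b != 0].
Proof.
case: Ag_regular => nonzero_prod _.
have [xs [xs_in]] := nonzero_prod 2 [tuple g; - g].
rewrite !big_ord_recl big_ord0 mulr1 => ab_neq0.
exists (tnth xs ord0), (tnth xs (lift ord0 ord0)).
by split=> //; apply: (xs_in (_ : 'I_2)).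
Qed.

Lemma regular_component_line g :
  exists a : A, Ag g = <[a]>%VS /\ exists v, v * a = 1.
Proof.
have [a [b [a_in b_in ab_neq0]]] := regular_nonzero_pair g.
have [c ba_c] : exists c, b * a = c *: 1.
  by apply: in_Ag0; rewrite -(addNr g); apply: grading_mul.
(* [a b] and [b a] differ by the nonzero factor [beta g (-g)]. *)
have c_neq0 : c != 0.
  case: Ag_regular => _ [_ beta_comm]; apply: contraNneq ab_neq0 => c0.
  by rewrite (beta_comm _ _ _ _ a_in b_in) ba_c c0 !scale0r scaler0.
have b_inv : (c^-1 *: b) * a = 1 by rewrite -scalerAl ba_c scalerA mulVf ?scale1r.
exists a; split; last by exists (c^-1 *: b).
apply/eqP; rewrite eqEsubv -memvE a_in andbT; apply/subvP => x x_in.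
have [d xb_d] : exists d, x * b = d *: 1.
  by apply: in_Ag0; rewrite -(subrr g); apply: grading_mul.
have -> : x = (x * (c^-1 *: b)) * a by rewrite -mulrA b_inv mulr1.
by rewrite -scalerAr xb_d scalerA -scalerAl mul1r memvZ ?memv_line.
Qed.

Lemma regular_unit_basis : exists u : G -> A,
  [/\ u 0 = 1, forall g, Ag g = <[u g]>%VS & forall g, exists v, v * u g = 1].
Proof.
have [u u_gen] := fin_all_exists regular_component_line.
exists (fun g => if g == 0 then 1 else u g); split=> [|g|g]; rewrite ?eqxx //.
- by case: eqP => [->|_]; [rewrite Ag0 | case: (u_gen g)].
- by case: eqP => _; [exists 1; rewrite mulr1 | case: (u_gen g)].
Qed.

End RegularGrading.

Theorem mainTheorem1 (K : closedFieldType) (HK : [pchar K] =i pred0)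
    (A : falgType K) (Ag : Z2Z2 -> {vspace A}) (beta : Z2Z2 -> Z2Z2 -> K)
    (Hgr : is_grading Ag) (Hreg : regular_grading Ag beta)
    (H0 : Ag 0 = <[1 : A]>%VS) :
  exists alpha : Z2Z2 -> Z2Z2 -> K,
    is_2cocycle alpha /\ induces alpha beta /\
    exists phi : A -> {ffun Z2Z2 -> K}, graded_iso_twisted Ag alpha phi.
Proof.
have [u [u0 Ag_line u_invl]] := regular_unit_basis Hgr Hreg H0.
have [alpha u_mul] := line_basis_structure_constants Hgr Ag_line.
have beta_comm : forall g h a b,
    a \in Ag g -> b \in Ag h -> a * b = beta g h *: (b * a).
  by case: Hreg => _ [].
exists alpha; split; first exact: (structure_constant_cocycle u_invl u_mul).
split; first exact: (structure_constant_induces Ag_line u_invl u_mul beta_comm).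
exists (coords u); exact: (twisted_group_algebra_iso Hgr Ag_line u_invl u_mul u0).
Qed.
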